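(* Let $(\alpha_i)_{i\in I}$, $I=\{1,2,\dots\}\cup\{\omega\}$, be a family of non-negative reals, let $j$ be a positive integer, and let $(\beta_i)_{i\in I}$ be obtained from $(\alpha_i)$ by rearranging $\alpha_j,\alpha_{j+1}$ from smaller to larger, i.e. $\beta_j=\min(\alpha_j,\alpha_{j+1})$, $\beta_{j+1}=\max(\alpha_j,\alpha_{j+1})$, and $\beta_i=\alpha_i$ for $i\notin\{j,j+1\}$. If $\kappa_i(\alpha_i)$ and $\kappa_i(\beta_i)$ converge, then $\kappa_i(\alpha_i)\ge\kappa_i(\beta_i)$.
   Context: For a family $(\gamma_i)_{i\in I}$ of non-negative reals (with $n<\omega$ for all positive integers $n$), $\kappa_i(\gamma_i)$ is the limit of the approximants $P_0=\gamma_\omega$, $P_n=\sqrt{\gamma_1^{2^1}+\sqrt{\gamma_2^{2^2}+\dots+\sqrt{\gamma_n^{2^n}+\gamma_\omega^{2^n}}}}$ ($n$ nested roots). *)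

From HB Require Import structures.
From mathcomp Require Import all_boot all_order all_algebra.
From mathcomp Require Import all_classical all_reals all_analysis.
Set Implicit Arguments. Unset Strict Implicit. Unset Printing Implicit Defensive.
Import Order.TTheory GRing.Theory Num.Theory.
Local Open Scope ring_scope.

(* A family (gamma_i)_{i in I}, I = {1,2,...} u {omega}, is represented by
   g : nat -> R (g i = gamma_i for i >= 1; g 0 is unused) and w : R (= gamma_omega). *)

(* nest g w c k = sqrt(g_k^(2^k) + sqrt(g_(k+1)^(2^(k+1)) + ... +
                   sqrt(g_(k+c-1)^(2^(k+c-1)) + w^(2^(k+c-1))))), with c nested roots;
   for c = 0 it is w^(2^(k-1)). *)
Fixpoint nest (R : realType) (g : nat -> R) (w : R) (c k : nat) {struct c} : R :=
  match c with
  | 0 => w ^+ (2 ^ k.-1)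
  | c'.+1 => Num.sqrt (g k ^+ (2 ^ k) + nest g w c' k.+1)
  end.

Definition kappa_approx (R : realType) (g : nat -> R) (w : R) (n : nat) : R :=
  nest g w n 1.

From HB Require Import structures.
From mathcomp Require Import all_boot all_order all_algebra.
From mathcomp Require Import all_classical all_reals all_analysis.
From mathcomp Require Import lra zify.
Import Order.TTheory GRing.Theory Num.Theory numFieldNormedType.Exports.
Local Open Scope ring_scope.

(* The approximants only see the swapped pair through two consecutive
   levels sqrt (x^(2^j) + sqrt (y^(2^(j+1)) + X)).  Putting the smaller value
   outside can only decrease this, because t |-> sqrt (t^2 + X) - t is
   nonincreasing on [0, +oo).  Every outer root is monotone, so the inequality
   propagates to every approximant and hence to the limits. *)

Lemma swap_sqrt_sqrD_le (R : rcfType) (p q X : R) :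
  0 <= p -> p <= q -> 0 <= X ->
  p + Num.sqrt (q ^+ 2 + X) <= q + Num.sqrt (p ^+ 2 + X).
Proof.
move=> p_ge0 le_pq X_ge0.
set B := Num.sqrt (p ^+ 2 + X).
have B_ge0 : 0 <= B := sqrtr_ge0 _.
have sqrB : B ^+ 2 = p ^+ 2 + X by rewrite sqr_sqrtr // addr_ge0 ?sqr_ge0.
have le_pB : p <= B by rewrite -(ler_pXn2r (_ : 0 < 2)%N) ?nnegrE // sqrB lerDl.
(* (B + (q - p))^2 - (q^2 + X) = 2 (q - p) (B - p) >= 0 *)
rewrite -lerBrDl; apply: le_trans (_ : Num.sqrt ((B + (q - p)) ^+ 2) <= _).
  by rewrite ler_wsqrtr //; nra.
by rewrite sqrtr_sqr ger0_norm; lra.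
Qed.

Lemma nest_ge0 (R : realType) (g : nat -> R) (w : R) c k :
  0 <= w -> 0 <= nest g w c k.
Proof. by move=> w_ge0; case: c => [|c] /=; [exact: exprn_ge0|exact: sqrtr_ge0]. Qed.

Lemma nestSS (R : realType) (g : nat -> R) (w : R) c k :
  nest g w c.+2 k =
  Num.sqrt (g k ^+ (2 ^ k) + Num.sqrt ((g k.+1 ^+ (2 ^ k)) ^+ 2 + nest g w c k.+2)).
Proof. by rewrite /= expnS mulnC exprM. Qed.

Section NestComparison.

Variables (R : realType) (w : R) (a b : nat -> R).

Lemma eq_nest c k : (forall i, (k <= i)%N -> b i = a i) ->
  nest b w c k = nest a w c k.
Proof.
elim: c k => [|c IH] k eq_ab //=.
by rewrite eq_ab // IH // => i /ltnW; exact: eq_ab.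
Qed.

Lemma nest_swap_le j c : 0 <= w -> 0 <= a j -> 0 <= a j.+1 ->
  b j = Num.min (a j) (a j.+1) -> b j.+1 = Num.max (a j) (a j.+1) ->
  (forall i, (j.+2 <= i)%N -> b i = a i) ->
  nest b w c j <= nest a w c j.
Proof.
move=> w_ge0 aj_ge0 aj1_ge0 bj bj1 eq_tail.
case: c => [|[|c]] //.
  rewrite /= ler_wsqrtr // lerD2r bj.
  by rewrite lerXn2r ?nnegrE ?le_min ?aj_ge0 ?ge_min ?lexx.
rewrite !nestSS (eq_nest _ _ eq_tail) bj bj1.
have X_ge0 : 0 <= nest a w c j.+2 := nest_ge0 _ _ _ _ _ w_ge0.
case: (leP (a j) (a j.+1)) => [//|/ltW le_a].
rewrite ler_wsqrtr //.
by rewrite swap_sqrt_sqrD_le ?exprn_ge0 ?lerXn2r ?nnegrE.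
Qed.

Lemma ler_nest_lift k n :
  (forall i, (k <= i < k + n)%N -> b i = a i) ->
  (forall c, nest b w c (k + n) <= nest a w c (k + n)) ->
  forall c, nest b w c k <= nest a w c k.
Proof.
elim: n k => [|n IH] k eq_ab le_ab; first by move: le_ab; rewrite addn0.
case=> [|c] //=.
rewrite ler_wsqrtr // eq_ab ?leqnn ?addnS ?ltnS ?leq_addr // lerD2l.
apply: IH => [i /andP[lt_ki lt_in]|]; last by rewrite addSnnS.
by rewrite eq_ab // (ltnW lt_ki) addnS (leq_trans lt_in).
Qed.

End NestComparison.

Theorem lemma10 (R : realType) (a b : nat -> R) (w : R) (j : nat)
  (ha : forall i, (0 < i)%N -> 0 <= a i) (hw : 0 <= w) (hj : (0 < j)%N)
  (hbj : b j = Num.min (a j) (a j.+1))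
  (hbj1 : b j.+1 = Num.max (a j) (a j.+1))
  (hbi : forall i, i <> j -> i <> j.+1 -> b i = a i)
  (ca : cvgn (kappa_approx a w)) (cb : cvgn (kappa_approx b w)) :
  limn (kappa_approx b w) <= limn (kappa_approx a w).
Proof.
have eq_tail i : (j.+2 <= i)%N -> b i = a i.
  by move=> lt_ji; apply: hbi; lia.
have eq_head i : (1 <= i < 1 + j.-1)%N -> b i = a i.
  by move=> /andP[_ lt_ij]; apply: hbi; lia.
have le_at_j c : nest b w c j <= nest a w c j.
  exact: nest_swap_le hw (ha j hj) (ha j.+1 isT) hbj hbj1 eq_tail.
have le_approx n : kappa_approx b w n <= kappa_approx a w n.
  by apply: ler_nest_lift eq_head _ n => c; rewrite add1n prednK.
by apply: ler_lim => //; near=> n; exact: le_approx.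
Unshelve. all: by end_near.
Qed.
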